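(* Let $B\subset\mathbb C$ be a Bernstein set. Then there exists a perfectly everywhere surjective function $f:\mathbb C\to\mathbb C$ such that $f(x)=1$ for every $x\in\mathbb C\setminus B$.
   Context: A perfect subset of $\mathbb C$ is a nonempty closed set with no isolated points. A set $B\subset\mathbb C$ is a Bernstein set if both $B$ and $\mathbb C\setminus B$ meet every perfect subset of $\mathbb C$. A function $f:\mathbb C\to\mathbb C$ is perfectly everywhere surjective if $f(P)=\mathbb C$ for every perfect set $P\subset\mathbb C$. *)

From HB Require Import structures.
From mathcomp Require Import all_boot all_order all_algebra.
From mathcomp Require Import all_classical all_reals all_analysis.
Set Implicit Arguments. Unset Strict Implicit. Unset Printing Implicit Defensive.
Import Order.TTheory GRing.Theory Num.Theory.
Import numFieldNormedType.Exports.
Local Open Scope classical_set_scope.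
Local Open Scope ring_scope.

(* The complex plane, modelled as R x R with the product topology
   (homeomorphic to C); the complex number 1 is (1, 0). *)
Notation cplx R := (R * R)%type (only parsing).
Definition cone (R : realType) : cplx R := (1, 0).

Definition perfect (R : realType) (P : set (cplx R)) : Prop :=
  P !=set0 /\ perfect_set P.

Definition bernstein (R : realType) (B : set (cplx R)) : Prop :=
  forall P : set (cplx R), perfect P -> (B `&` P) !=set0 /\ (~` B `&` P) !=set0.

Definition perfectly_everywhere_surjective (R : realType)
  (f : cplx R -> cplx R) : Prop :=
  forall P : set (cplx R), perfect P -> f @` P = setT.

(* Well-order the continuum c = 2^N so that every initial segment has fewer
   than c elements.  A Cantor scheme inside a perfect set P of the plane yields
   c pairwise disjoint perfect pieces of P, each meeting the Bernstein set B, so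
   B meets every perfect set in c points.  The pairs (P, y) with P perfect are
   at most c many (a closed set is determined by the rational balls it misses),
   so transfinite recursion picks pairwise distinct points x_(P,y) in B ∩ P;
   f sends x_(P,y) to y and every other point to 1. *)

From mathcomp Require Import all_boot all_order all_algebra.
From mathcomp Require Import all_classical all_reals all_analysis.
From mathcomp Require Import wochoice lra zify.
Set Implicit Arguments. Unset Strict Implicit. Unset Printing Implicit Defensive.
Import Order.TTheory GRing.Theory Num.Theory numFieldNormedType.Exports.
Local Open Scope classical_set_scope.
Local Open Scope ring_scope.

Definition injects_into (U : Type) {T : Type} (A : set T) : Prop :=
  exists2 e : U -> T, injective e & range e `<=` A.

Section TransfiniteChoice.
Variable I : eqType.

Definition wo_le : rel I := proj1_sig (well_ordering_principle I).
Definition wo_lt (k j : I) : Prop := wo_le k j /\ k <> j.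

Lemma wo_leP : well_order wo_le.
Proof. exact: proj2_sig. Qed.

Lemma wo_le_minimum (A : set I) : A !=set0 -> exists2 z, A z & forall a, A a -> wo_le z a.
Proof.
move=> [a Aa]; have [|z [[zA lbz] _]] := @wo_leP (mem A); first by exists a; rewrite inE.
by exists z => [|b Ab]; [rewrite -inE | apply: lbz; rewrite inE].
Qed.

Lemma wo_le_chain : wo_chain wo_le predT.
Proof. by move=> A _; exact: wo_leP. Qed.

Lemma wo_le_total (a b : I) : wo_le a b || wo_le b a.
Proof. exact: wo_chainW wo_le_chain a b isT isT. Qed.

Lemma wo_le_anti (a b : I) : wo_le a b -> wo_le b a -> a = b.
Proof. by move=> ab ba; apply: (wo_chain_antisymmetric wo_le_chain) => //; rewrite ab ba. Qed.

Lemma wo_lt_wf : well_founded wo_lt.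
Proof.
move=> a; apply: contrapT => na.
have [z nz minz] := @wo_le_minimum (fun z => ~ Acc wo_lt z) (ex_intro _ a na).
apply: nz; constructor => y [yz neq]; apply: contrapT => ny.
by apply: neq; apply: wo_le_anti => //; apply: minz.
Qed.

Lemma wo_initial_segment :
  exists2 J : set I, injects_into I J & forall j, J j -> ~ injects_into I (wo_lt^~ j).
Proof.
have [[a Ia] | none] := pselect (exists a, injects_into I (wo_lt^~ a)).
  have [m Im minm] := @wo_le_minimum (fun a => injects_into I (wo_lt^~ a)) (ex_intro _ a Ia).
  exists (wo_lt^~ m) => // j [jm neq] Ij.
  by apply: neq; apply: wo_le_anti => //; exact: minm.
by exists setT => [|j _ Ij]; [exists id | apply: none; exists j].
Qed.

Section Recursion.
Variables (X : pointedType) (C : I -> set X).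

Definition wo_choice : I -> X := Fix wo_lt_wf (fun=> X)
  (fun j rec => get [set z | C j z /\ forall k (h : wo_lt k j), z <> rec k h]).

Lemma wo_choiceE j :
  wo_choice j = get [set z | C j z /\ forall k, wo_lt k j -> z <> wo_choice k].
Proof.
rewrite /wo_choice Fix_eq // => a f g fg.
by have -> : f = g by apply: functional_extensionality_dep => k; apply: funext.
Qed.

(* Fewer than |I| earlier choices cannot exhaust a set receiving an injection of I. *)
Lemma wo_choiceP j : injects_into I (C j) -> ~ injects_into I (wo_lt^~ j) ->
  C j (wo_choice j) /\ forall k, wo_lt k j -> wo_choice j <> wo_choice k.
Proof.
move=> [e einj eC] small; rewrite wo_choiceE.
apply: (@getPex _ [set z | C j z /\ forall k, wo_lt k j -> z <> wo_choice k]).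
apply: contrapT => none; apply: small.
have /choice [g gP] i : exists k, wo_lt k j /\ e i = wo_choice k.
  apply: contrapT => nk; apply: none; exists (e i); split; first exact: eC.
  by move=> k kj eik; apply: nk; exists k.
exists g => [i i' gii'|_ [i _ <-]]; last exact: (gP i).1.
by apply: einj; rewrite (gP i).2 (gP i').2 gii'.
Qed.

End Recursion.

End TransfiniteChoice.

Lemma transfinite_injective_choice (I : eqType) :
  exists2 J : set I, injects_into I J &
    forall (X : pointedType) (D : set I) (C : I -> set X), D `<=` J ->
    (forall j, D j -> injects_into I (C j)) ->
    exists2 x : I -> X, (forall j, D j -> C j (x j)) & set_inj D x.
Proof.
have [J IJ small] := wo_initial_segment I.
exists J => // X D C DJ IC; exists (@wo_choice I X C) => [j Dj|j k /[!inE] Dj Dk ejk].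
  exact: (wo_choiceP (IC j Dj) (small j (DJ j Dj))).1.
apply: contrapT => neq.
have /orP[jk|kj] := wo_le_total j k.
  exact: (wo_choiceP (IC k Dk) (small k (DJ k Dk))).2 j (conj jk neq) (esym ejk).
have kj' : wo_lt k j by split => // /esym.
exact: (wo_choiceP (IC j Dj) (small j (DJ j Dj))).2 k kj' ejk.
Qed.

Lemma ballE (K : numFieldType) (V : normedModType K) (x y : V) (e : K) :
  ball x e y = (`|x - y| < e).
Proof. by rewrite -ball_normE. Qed.

Lemma natSinv_lt (R : archiRealFieldType) (e : R) : 0 < e -> exists n, (n.+1%:R)^-1 < e.
Proof.
move=> e0; exists (Num.truncn e^-1); have := truncnS_gt e^-1.
by set n := Num.truncn _ => ?; rewrite -[e]invrK ltf_pV2 ?posrE ?invr_gt0.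
Qed.

Definition cylinder (a : cantor_space) (n : nat) : set cantor_space :=
  [set b | forall i, (i < n)%N -> b i = a i].

Lemma cylinder_open a n : open (cylinder a n).
Proof.
elim: n => [|n IH].
  by rewrite (_ : cylinder a 0 = setT); [exact: openT | apply/seteqP; split].
rewrite (_ : cylinder a n.+1 = cylinder a n `&` (proj n @^-1` [set a n])).
  apply: openI => //; apply: open_comp; last exact: discrete_open.
  by move=> x _; exact: proj_continuous.
apply/seteqP; split => b /=.
  by move=> h; split; [move=> i hi; apply: h; apply: ltnW | apply: h].
by move=> [h1 h2] i; rewrite ltnS leq_eqVlt => /orP[/eqP-> | /h1].
Qed.

Lemma cylinder_nbhs a n : nbhs a (cylinder a n).
Proof. by apply: open_nbhs_nbhs; split; [exact: cylinder_open|]. Qed.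

Section CantorScheme.
Variables (R : realType) (P : set (cplx R)).
Hypothesis perfectP : perfect P.

Definition near_point (c : cplx R) (r : R) : cplx R :=
  get [set z | P z /\ z != c /\ `|c - z| < r / 2].

Lemma near_pointP c r : P c -> 0 < r ->
  P (near_point c r) /\ near_point c r != c /\ `|c - near_point c r| < r / 2.
Proof.
move=> Pc r0; apply: (@getPex _ [set z | P z /\ z != c /\ `|c - z| < r / 2]).
have [_ [_ lpP]] := perfectP; have : limit_point P c by rewrite lpP.
move=> /(_ (ball c (r / 2))) [|y [yc Py cy]]; first by apply: nbhsx_ballx; rewrite divr_gt0.
by exists y; split => //; split => //; rewrite -ballE.
Qed.

(* A node (c, r) has two children: the same centre and a nearby point c' of P,
   both with radius at most |c - c'| / 4, so the doubled child balls are disjoint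
   and lie inside the parent ball. *)
Definition split_ball (cr : cplx R * R) (b : bool) : cplx R * R :=
  let c' := near_point cr.1 cr.2 in
  (if b then c' else cr.1, Num.min (cr.2 / 4) (`|cr.1 - c'| / 4)).

Fixpoint tree_ball (u : seq bool) : cplx R * R :=
  if u is b :: u' then split_ball (tree_ball u') b else (get P, 1).

Lemma tree_ballP u : P (tree_ball u).1 /\ 0 < (tree_ball u).2.
Proof.
elim: u => [|b u [Pc r0]] /=.
  by split => //; have [[z Pz] _] := perfectP; exact: (@getPex _ P (ex_intro _ z Pz)).
have [Pc' [c'c _]] := near_pointP Pc r0.
split; first by case: b.
by rewrite lt_min !divr_gt0 // normr_gt0 subr_eq0 eq_sym.
Qed.

Lemma split_ball_sub u b :
  ball (tree_ball (b :: u)).1 (2 * (tree_ball (b :: u)).2) `<=`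
  ball (tree_ball u).1 (tree_ball u).2.
Proof.
have [Pc r0] := tree_ballP u; have [_ [_ cc']] := near_pointP Pc r0.
move=> z; rewrite /= !ballE.
set c := (tree_ball u).1 in Pc cc' *; set r := (tree_ball u).2 in r0 cc' *.
set c' := near_point c r in cc' *; set m := Num.min _ _ => zm.
have mr : m <= r / 4 by rewrite ge_min lexx.
have cb : `|c - (if b then c' else c)| < r / 2.
  by case: (b) => //; rewrite subrr normr0 divr_gt0.
by rewrite (le_lt_trans (ler_distD (if b then c' else c) _ _)) //; lra.
Qed.

Lemma split_ball_disj u b b' z : b != b' ->
  ball (tree_ball (b :: u)).1 (2 * (tree_ball (b :: u)).2) z ->
  ~ ball (tree_ball (b' :: u)).1 (2 * (tree_ball (b' :: u)).2) z.
Proof.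
rewrite !ballE /=; set c := (tree_ball u).1; set r := (tree_ball u).2.
set c' := near_point c r; set m := Num.min _ _.
have mc' : m <= `|c - c'| / 4 by rewrite ge_min lexx orbT.
have tri := ler_distD z c c'; rewrite [`|z - _|]distrC in tri.
by case: b b' => -[] //= _ h1 h2; lra.
Qed.

Fixpoint prefix (a : nat -> bool) (n : nat) : seq bool :=
  if n is m.+1 then a m :: prefix a m else [::].

Definition center a n := (tree_ball (prefix a n)).1.
Definition radius a n := (tree_ball (prefix a n)).2.

Lemma radius_gt0 a n : 0 < radius a n.
Proof. exact: (tree_ballP _).2. Qed.

Lemma radius_le a n : radius a n <= (n.+1%:R)^-1.
Proof.
elim: n => [|n IH]; first by rewrite /radius /= invr1.
have quarter : radius a n.+1 <= radius a n / 4 by rewrite /radius /= ge_min lexx.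
have : (n.+1%:R)^-1 / 4 <= (n.+2%:R)^-1 :> R.
  rewrite -invfM lef_pV2 ?posrE ?mulr_gt0 // -[n.+2]addn1 -[n.+1]addn1 !natrD.
  by have : 0 <= n%:R :> R by []; lra.
by apply: le_trans; apply: (le_trans quarter); rewrite ler_pM2r.
Qed.

Lemma radius_small a e : 0 < e -> exists n, radius a n < e.
Proof. by move=> /natSinv_lt [n ne]; exists n; exact: le_lt_trans (radius_le a n) ne. Qed.

Lemma center_ball_nested a n k :
  ball (center a (n + k)) (radius a (n + k)) `<=` ball (center a n) (radius a n).
Proof.
elim: k => [|k IH]; first by rewrite addn0.
apply: subset_trans IH; rewrite addnS.
apply: subset_trans (@split_ball_sub (prefix a (n + k)) (a (n + k))).
by apply: le_ball; have := radius_gt0 a (n + k).+1; rewrite /radius /=; lra.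
Qed.

Lemma center_in_ball a n m : (n <= m)%N -> ball (center a n) (radius a n) (center a m).
Proof. by move=> /subnKC <-; apply: center_ball_nested; exact: ballxx (radius_gt0 _ _). Qed.

Lemma center_cluster a : exists z : cplx R, cluster (center a @ \oo) z.
Proof.
pose c := center a 0.
pose U := `[c.1 - 1, c.1 + 1]%classic `*` `[c.2 - 1, c.2 + 1]%classic.
have cU : compact U by apply: compact_setX; exact: segment_compact.
have FU : (center a @ \oo) U.
  exists 0%N => // m _ /=; have := center_in_ball a (leq0n m).
  rewrite /radius /= => -[]; rewrite -!ball_normE /= !ltr_norml.
  move=> /andP[? ?] /andP[? ?].
  by split; rewrite /= in_itv /=; apply/andP; split; lra.
by have [z [_ ?]] := cU _ _ FU; exists z.
Qed.

Definition branch (a : cantor_space) : cplx R := get (cluster (center a @ \oo)).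

Lemma branch_cluster a : cluster (center a @ \oo) (branch a).
Proof. by have [z cz] := center_cluster a; exact: (@getPex _ _ (ex_intro _ z cz)). Qed.

Lemma branch_in_closed a (C : set (cplx R)) : closed C -> (center a @ \oo) C -> C (branch a).
Proof. by move=> cC FC; apply: cC => V Vb; exact: branch_cluster FC Vb. Qed.

Lemma branch_in_double_ball a n : ball (center a n.+1) (2 * radius a n.+1) (branch a).
Proof.
have : closed_ball (center a n.+1) (radius a n.+1) (branch a).
  apply: branch_in_closed; first exact: closed_ball_closed.
  by exists n.+1 => // m /= ?; apply: subset_closed_ball; exact: center_in_ball.
have := @subset_closure_half _ _ (center a n.+1) (2 * radius a n.+1).
rewrite mulrAC divff ?mul1r //; apply; exact: mulr_gt0 (radius_gt0 _ _).
Qed.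

Lemma branch_in_ball a n : ball (center a n) (radius a n) (branch a).
Proof. exact: split_ball_sub (branch_in_double_ball a n). Qed.

Lemma branch_in a : P (branch a).
Proof.
have [_ [cP _]] := perfectP.
by apply: branch_in_closed => //; exists 0%N => // m _; exact: (tree_ballP _).1.
Qed.

Lemma prefix_eq a b n : (forall i, (i < n)%N -> a i = b i) -> prefix a n = prefix b n.
Proof.
elim: n => [//|n IH] h /=.
by rewrite h // IH // => i hi; apply: h; exact: ltnW.
Qed.

Lemma branch_close a b n : (forall i, (i < n)%N -> a i = b i) ->
  `|branch a - branch b| < 2 * radius a n.
Proof.
move=> ab; have := branch_in_ball a n; have := branch_in_ball b n.
rewrite /center /radius -(prefix_eq ab) !ballE.
have := ler_distD (tree_ball (prefix a n)).1 (branch a) (branch b).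
by rewrite (distrC (branch a) (tree_ball _).1); lra.
Qed.

(* Two branches part at the first index where they differ, into disjoint balls. *)
Lemma branch_inj : injective branch.
Proof.
move=> a b ab; apply: funext => k; apply: contrapT => nk.
have [|n abn minn] := ex_minnP (P := fun n => a n != b n); first by exists k; apply/eqP.
have pre i : (i < n)%N -> a i = b i.
  by move=> lt_in; apply/eqP; apply: contraTT lt_in; rewrite -leqNgt; exact: minn.
have := branch_in_double_ball b n.
rewrite /center /radius /= -(prefix_eq pre) -ab.
exact: split_ball_disj abn (branch_in_double_ball a n).
Qed.

Lemma branch_continuous : continuous branch.
Proof.
move=> a U /= /nbhs_ballP [e e0 eU].
have [n ne] := radius_small a (divr_gt0 e0 (ltr0Sn _ 1)).
apply: filterS (cylinder_nbhs a n) => b ab; apply: eU; rewrite ballE.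
by have := branch_close (fun i lt_in => esym (ab i lt_in)); lra.
Qed.

(* Fixing the even coordinates leaves a copy of the Cantor space, so the pieces
   are perfect, and distinct fixings give disjoint pieces. *)
Definition even_fibre (s : nat -> bool) : set cantor_space := [set a | forall m, a m.*2 = s m].
Definition piece (s : nat -> bool) : set (cplx R) := branch @` even_fibre s.

Lemma even_fibre_closed s : closed (even_fibre s).
Proof.
move=> a ha m; have [b [fb ab]] := ha _ (cylinder_nbhs a m.*2.+1).
by rewrite -(ab m.*2 (ltnSn _)); exact: fb.
Qed.

Lemma piece_closed s : closed (piece s).
Proof.
apply: compact_closed; first exact: norm_hausdorff.
apply: continuous_compact; first exact: continuous_subspaceT branch_continuous.
by apply: subclosed_compact (@even_fibre_closed s) cantor_space_compact _.
Qed.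

Lemma piece_sub s : piece s `<=` P.
Proof. by move=> x [a _ <-]; exact: branch_in. Qed.

Lemma piece_disj s s' x : piece s x -> piece s' x -> s = s'.
Proof.
move=> [a fa <-] [b fb /branch_inj ba].
by apply: funext => m; rewrite -fa -fb ba.
Qed.

Lemma piece_perfect s : perfect (piece s).
Proof.
split.
  pose a n := if odd n then false else s n./2.
  by exists (branch a), a => // m; rewrite /a odd_double doubleK.
split; first exact: piece_closed.
apply/seteqP; split => [x px | _ [a fa <-] U /nbhs_ballP [e e0 eU]].
  apply: piece_closed => U Ux.
  by have [y [_ py Uy]] := px U Ux; exists y.
have [n ne] := radius_small a (divr_gt0 e0 (ltr0Sn _ 1)).
(* Flip an odd coordinate beyond n: still in the fibre, close, but distinct. *)
pose b i := if i == n.*2.+1 then ~~ a i else a i.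
have ab i : (i < n)%N -> a i = b i.
  by move=> lt_in; rewrite /b; case: eqP => // ein; move: lt_in; rewrite ein -addnn; lia.
exists (branch b); split.
- apply/eqP => /branch_inj /(congr1 (fun f => f n.*2.+1)).
  by rewrite /b eqxx; case: (a _).
- exists b => // m; rewrite /b; case: eqP => [|_]; last exact: fa.
  by move=> /(congr1 odd); rewrite odd_double /= odd_double.
- by apply: eU; rewrite ballE; have := branch_close ab; lra.
Qed.

End CantorScheme.

Lemma bernstein_injects (R : realType) (B P : set (cplx R)) :
  bernstein B -> perfect P -> injects_into (nat -> bool) (B `&` P).
Proof.
move=> bB hP; pose e s := get (B `&` piece P s).
have eP s : (B `&` piece P s) (e s).
  by have [ne _] := bB _ (piece_perfect hP s); exact: getPex.
exists e => [s s' ess' | _ [s _ <-]].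
  by have [_ ps] := eP s; have [_] := eP s'; rewrite -ess'; exact: piece_disj ps.
by have [Be pe] := eP s; split => //; exact: piece_sub pe.
Qed.

Section Coding.
Variable R : realType.

Definition rat_ball (q : rat * rat * rat) : set (cplx R) :=
  ball ((ratr q.1.1, ratr q.1.2) : cplx R) (ratr q.2).

Definition code (S : set (cplx R)) (y : cplx R) : nat -> bool := fun n =>
  match @unpickle (rat * rat * rat + rat + rat)%type n with
  | Some (inl (inl q)) => `[< S `&` rat_ball q = set0 >]
  | Some (inl (inr q)) => ratr q < y.1
  | Some (inr q) => ratr q < y.2
  | None => false
  end.

Lemma ratr_lt_inj (x y : R) : (forall q : rat, (ratr q < x) = (ratr q < y)) -> x = y.
Proof.
have sep (u v : R) : u < v -> exists q : rat, (ratr q < u) != (ratr q < v).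
  move=> uv; have [q] := rat_in_itvoo uv; rewrite in_itv /= => /andP[uq qv].
  by exists q; rewrite qv ltNge (ltW uq).
move=> xy; case: (ltgtP x y) => // [/sep | /sep] [q]; by rewrite xy eqxx.
Qed.

Lemma closed_rat_ball_sub (S T : set (cplx R)) : closed T ->
  (forall q, T `&` rat_ball q = set0 -> S `&` rat_ball q = set0) -> S `<=` T.
Proof.
move=> cT ST z Sz; apply: contrapT => nTz.
have /nbhs_ballP [e e0 eT] : nbhs z (~` T).
  by apply: open_nbhs_nbhs; split => //; exact: closed_openC.
have [r] := rat_in_itvoo (divr_gt0 e0 (ltr0Sn _ 1)); rewrite in_itv /= => /andP[r0 re].
have [q1] : exists q1, ratr q1 \in `]z.1 - ratr r, z.1 + ratr r[ by apply: rat_in_itvoo; lra.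
rewrite in_itv /= => /andP[q1l q1r].
have [q2] : exists q2, ratr q2 \in `]z.2 - ratr r, z.2 + ratr r[ by apply: rat_in_itvoo; lra.
rewrite in_itv /= => /andP[q2l q2r].
have zq : rat_ball (q1, q2, r) z.
  by split; rewrite /= -ball_normE /= ltr_distlC; apply/andP; split; lra.
have Tq : T `&` rat_ball (q1, q2, r) = set0.
  apply/seteqP; split => // w [Tw qw]; apply: (eT w) => //.
  by apply: le_ball (ball_triangle (ball_sym zq) qw); lra.
by have : (S `&` rat_ball (q1, q2, r)) z by []; rewrite (ST _ Tq).
Qed.

Lemma code_inj (S T : set (cplx R)) (x y : cplx R) : closed S -> closed T ->
  code S x = code T y -> S = T /\ x = y.
Proof.
move=> cS cT eq.
have bit (t : rat * rat * rat + rat + rat) :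
  code S x (pickle t) = code T y (pickle t) by rewrite eq.
have miss q : S `&` rat_ball q = set0 <-> T `&` rat_ball q = set0.
  by have := bit (inl (inl q)); rewrite /code pickleK /=; exact: asbool_eq_equiv.
split; first by apply/seteqP; split; apply: closed_rat_ball_sub => // q /miss.
have coord1 q : (ratr q < x.1) = (ratr q < y.1).
  by have := bit (inl (inr q)); rewrite /code pickleK /=.
have coord2 q : (ratr q < x.2) = (ratr q < y.2).
  by have := bit (inr q); rewrite /code pickleK /=.
by case: x y coord1 coord2 {eq bit} => [? ?] [? ?] /= /ratr_lt_inj -> /ratr_lt_inj ->.
Qed.

End Coding.

Theorem proposition3p3 (R : realType) (B : set (cplx R)) :
  bernstein B ->
  exists f : cplx R -> cplx R,
    perfectly_everywhere_surjective f /\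
    (forall x : cplx R, ~ B x -> f x = cone R).
Proof.
move=> bB.
have [J [c c_inj cJ] choose] := @transfinite_injective_choice (nat -> bool).
pose A := [set p : set (cplx R) * cplx R | perfect p.1].
pose idx (p : set (cplx R) * cplx R) := c (code p.1 p.2).
have idx_inj : {in A &, injective idx}.
  move=> [S y] [T z]; rewrite !inE /A /idx /= => -[_ [cS _]] [_ [cT _]].
  by move=> /c_inj /(code_inj cS cT) [-> ->].
pose dec := pinv A idx.
have decK p : A p -> dec (idx p) = p by move=> Ap; apply: pinvKV; rewrite ?inE.
pose D := idx @` A.
have DJ : D `<=` J by move=> _ [p _ <-]; apply: cJ; exists (code p.1 p.2).
have DBP j : D j -> injects_into (nat -> bool) (B `&` (dec j).1).
  by move=> [p Ap <-]; rewrite decK //; exact: bernstein_injects.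
have [x xBP x_inj] := choose _ D _ DJ DBP.
exists (fun z => if z \in x @` D then (dec (pinv D x z)).2 else cone R); split.
  move=> P perfectP; apply/seteqP; split => // y _.
  have Dj : D (idx (P, y)) by exists (P, y).
  exists (x (idx (P, y))); first by have := xBP _ Dj; rewrite decK // => -[].
  have xDj : x (idx (P, y)) \in x @` D by apply/mem_set; exists (idx (P, y)).
  by rewrite ifT // (pinvKV _ x_inj (mem_set Dj)) decK.
move=> z nBz; rewrite ifF //; apply/negbTE/negP => /set_mem [j Dj xj].
by apply: nBz; rewrite -xj; exact: (xBP j Dj).1.
Qed.
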